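(* Let $g\colon(0,1)\to\mathbb{R}$ be a continuous, strictly increasing function such that $g(1-a)=-g(a)$ for all $a\in(0,1)$ and $\lim_{a\to0^+}g(a)=-\infty$. Extend $g$ by $g(0)=-\infty$, $g(1)=\infty$, and extend $g^{-1}\colon\mathbb{R}\to(0,1)$ by $g^{-1}(-\infty)=0$, $g^{-1}(\infty)=1$. Then the function \[ J(a,b)=g^{-1}\bigl(g(a)-g(b)\bigr),\qquad (a,b)\in[0,1]^2\setminus\{(0,0),(1,1)\}, \] is an involutive Jamesian function.
   Context: Let $D=[0,1]^2\setminus\{(0,0),(1,1)\}$. A function $J\colon D\to\mathbb{R}$ is called Jamesian if it satisfies, for all $(a,b)\in D$: (a) $J(a,\tfrac12)=a$; (b) $J(a,0)=1$ for $0<a\le 1$; (c) $J(b,a)=1-J(a,b)$; (d) $J(1-b,1-a)=J(a,b)$; (e) $J(a,b)$ is a non-decreasing function of $a$ for each $0\le b\le 1$ and a strictly increasing function of $a$ for each $0<b<1$. A Jamesian function is called involutive if in addition $J(a,J(a,b))=b$ whenever $0<a<1$ and $0\le b\le 1$. In the formula for $J$, the conventions $-\infty-\infty=-\infty$, $\infty-(-\infty)=\infty$, $t\pm\infty=\pm\infty$ and $\pm\infty - t=\pm\infty$ for real $t$ are used. *)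

From Stdlib Require Import Reals Lra ClassicalEpsilon.
From Coquelicot Require Import Coquelicot.
Open Scope R_scope.

Definition inD (a b : R) : Prop :=
  0 <= a <= 1 /\ 0 <= b <= 1 /\ ~ (a = 0 /\ b = 0) /\ ~ (a = 1 /\ b = 1).

(* Jamesian functions (J given as a total function on R^2; only its
   values on D matter). *)
Definition Jamesian (J : R -> R -> R) : Prop :=
  (forall a, inD a (1/2) -> J a (1/2) = a) /\
  (forall a, 0 < a <= 1 -> J a 0 = 1) /\
  (forall a b, inD a b -> J b a = 1 - J a b) /\
  (forall a b, inD a b -> J (1 - b) (1 - a) = J a b) /\
  (forall b a1 a2, 0 <= b <= 1 -> inD a1 b -> inD a2 b -> a1 <= a2 ->
     J a1 b <= J a2 b) /\
  (forall b a1 a2, 0 < b < 1 -> inD a1 b -> inD a2 b -> a1 < a2 ->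
     J a1 b < J a2 b).

Definition involutive_Jamesian (J : R -> R -> R) : Prop :=
  Jamesian J /\
  (forall a b, 0 < a < 1 -> 0 <= b <= 1 -> J a (J a b) = b).

Definition gext (g : R -> R) (a : R) : Rbar :=
  if Rle_dec a 0 then m_infty
  else if Rle_dec 1 a then p_infty
  else Finite (g a).

(* The inverse g^{-1} : R -> (0,1), chosen by Hilbert's epsilon: the
   (unique, under the hypotheses) a in (0,1) with g a = y. *)
Definition ginv (g : R -> R) (y : R) : R :=
  epsilon (inhabits 0) (fun a => 0 < a < 1 /\ g a = y).

Definition ginvext (g : R -> R) (y : Rbar) : R :=
  match y with
  | Finite t => ginv g t
  | p_infty => 1
  | m_infty => 0
  end.

(* Subtraction on extended reals with the conventions of the paper:
   -oo - oo = -oo, oo - (-oo) = oo, t -/+ oo = -/+ oo, +/-oo - t = +/-oo.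
   (The undefined cases oo - oo and -oo - (-oo) only arise at (1,1),(0,0),
   which are excluded from D; here they are arbitrarily set.) *)
Definition esub (x y : Rbar) : Rbar :=
  match x, y with
  | Finite s, Finite t => Finite (s - t)
  | p_infty, _ => p_infty
  | m_infty, _ => m_infty
  | Finite _, p_infty => m_infty
  | Finite _, m_infty => p_infty
  end.

Definition Jg (g : R -> R) (a b : R) : R :=
  ginvext g (esub (gext g a) (gext g b)).

(* On the interior, J(a,b) = g^{-1}(g a - g b) inherits everything from g: strict
   monotonicity of g and g^{-1}, and the oddness g(1-a) = -g(a) (hence g(1/2) = 0 and
   g^{-1}(-y) = 1 - g^{-1}(y)). The limit at 0 together with this symmetry makes g
   unbounded in both directions, so by the intermediate value theorem g is a bijection
   onto R and the epsilon-chosen g^{-1} is its true inverse. On the boundary of the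
   square every value of J is forced to be 0 or 1 by the conventions for infinities. *)

From Stdlib Require Import Reals Lra ClassicalEpsilon.
From Coquelicot Require Import Coquelicot.
Open Scope R_scope.

Lemma unit_interval_cases (a : R) : 0 <= a <= 1 -> a = 0 \/ 0 < a < 1 \/ a = 1.
Proof. lra. Qed.

Lemma filterlim_m_infty_at_right0 (g : R -> R) (M : R) :
  filterlim g (at_right 0) (Rbar_locally m_infty) ->
  exists x, 0 < x < 1/2 /\ g x < M.
Proof.
  intros g_lim0.
  destruct (g_lim0 (fun t => t < M)) as [eps g_lt].
  { exists M; auto. }
  set (x := Rmin (eps / 2) (1 / 4)).
  assert (eps_pos : 0 < eps) by apply cond_pos.
  assert (x_pos : 0 < x) by (apply Rmin_pos; lra).
  assert (x_le : x <= eps / 2) by apply Rmin_l.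
  assert (x_le' : x <= 1 / 4) by apply Rmin_r.
  exists x; split; [lra|].
  apply g_lt; [|lra].
  unfold ball; simpl; unfold AbsRing_ball, abs, minus, plus, opp; simpl.
  rewrite Ropp_0, Rplus_0_r, Rabs_right; lra.
Qed.

Lemma odd_continuous_surjective (g : R -> R) :
  (forall a, 0 < a < 1 -> continuity_pt g a) ->
  (forall a, 0 < a < 1 -> g (1 - a) = - g a) ->
  filterlim g (at_right 0) (Rbar_locally m_infty) ->
  forall y, exists a, 0 < a < 1 /\ g a = y.
Proof.
  intros g_cont g_sym g_lim0 y.
  destruct (filterlim_m_infty_at_right0 g (- Rabs y - 1) g_lim0) as [x [Hx gx_lt]].
  pose proof (Rle_abs y); pose proof (Rle_abs (- y)); rewrite Rabs_Ropp in *.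
  pose proof (g_sym x ltac:(lra)).
  destruct (Ranalysis5.IVT_interv (fun t => g t - y) x (1 - x)) as [z [Hz gz]].
  - intros a Ha. apply continuity_pt_minus; [apply g_cont; lra | apply continuity_pt_const].
    now intros u v.
  - lra.
  - simpl; lra.
  - simpl; lra.
  - exists z; simpl in gz; split; lra.
Qed.

Section Inverse.

Variable g : R -> R.
Hypothesis g_incr : forall x y, 0 < x < 1 -> 0 < y < 1 -> x < y -> g x < g y.
Hypothesis g_surj : forall y, exists a, 0 < a < 1 /\ g a = y.

Lemma ginv_spec (y : R) : 0 < ginv g y < 1 /\ g (ginv g y) = y.
Proof. unfold ginv; apply epsilon_spec, g_surj. Qed.

Lemma ginv_range (y : R) : 0 < ginv g y < 1.
Proof. apply ginv_spec. Qed.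

Lemma g_ginv (y : R) : g (ginv g y) = y.
Proof. apply ginv_spec. Qed.

Lemma ginv_lt (y1 y2 : R) : y1 < y2 -> ginv g y1 < ginv g y2.
Proof.
  intros y12.
  pose proof (ginv_range y1); pose proof (ginv_range y2).
  destruct (Rtotal_order (ginv g y1) (ginv g y2)) as [lt | [eq | gt]]; auto.
  - rewrite <- (g_ginv y1), <- (g_ginv y2), eq in y12; lra.
  - pose proof (g_incr (ginv g y2) (ginv g y1) ltac:(assumption) ltac:(assumption) gt).
    rewrite !g_ginv in *; lra.
Qed.

Lemma ginv_g (a : R) : 0 < a < 1 -> ginv g (g a) = a.
Proof.
  intros Ha. pose proof (ginv_range (g a)); pose proof (g_ginv (g a)).
  destruct (Rtotal_order (ginv g (g a)) a) as [lt | [eq | gt]]; auto.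
  - pose proof (g_incr (ginv g (g a)) a ltac:(assumption) Ha lt); lra.
  - pose proof (g_incr a (ginv g (g a)) Ha ltac:(assumption) gt); lra.
Qed.

Hypothesis g_sym : forall a, 0 < a < 1 -> g (1 - a) = - g a.

Lemma g_half : g (1 / 2) = 0.
Proof.
  pose proof (g_sym (1 / 2) ltac:(lra)) as sym.
  replace (1 - 1 / 2) with (1 / 2) in sym by field; lra.
Qed.

Lemma ginv_opp (y : R) : ginv g (- y) = 1 - ginv g y.
Proof.
  pose proof (ginv_range y).
  rewrite <- (g_ginv y) at 1. rewrite <- g_sym by lra.
  apply ginv_g; lra.
Qed.

End Inverse.

Lemma Jg_interior (g : R -> R) (a b : R) :
  0 < a < 1 -> 0 < b < 1 -> Jg g a b = ginv g (g a - g b).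
Proof.
  intros Ha Hb; unfold Jg, gext.
  destruct (Rle_dec a 0), (Rle_dec b 0), (Rle_dec 1 a), (Rle_dec 1 b);
    try lra; reflexivity.
Qed.

Lemma Jg_0_l (g : R -> R) (b : R) : Jg g 0 b = 0.
Proof.
  unfold Jg, gext; destruct (Rle_dec 0 0); [reflexivity | lra].
Qed.

Lemma Jg_1_l (g : R -> R) (b : R) : Jg g 1 b = 1.
Proof.
  unfold Jg, gext; destruct (Rle_dec 1 0), (Rle_dec 1 1); try lra; reflexivity.
Qed.

Lemma Jg_0_r (g : R -> R) (a : R) : 0 < a -> Jg g a 0 = 1.
Proof.
  intros Ha; unfold Jg, gext.
  destruct (Rle_dec a 0), (Rle_dec 0 0), (Rle_dec 1 a); try lra; reflexivity.
Qed.

Lemma Jg_1_r (g : R -> R) (a : R) : a < 1 -> Jg g a 1 = 0.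
Proof.
  intros Ha; unfold Jg, gext.
  destruct (Rle_dec a 0), (Rle_dec 1 0), (Rle_dec 1 a), (Rle_dec 1 1);
    try lra; reflexivity.
Qed.

Ltac Jg_boundary :=
  repeat first
    [ rewrite Jg_0_l | rewrite Jg_1_l
    | rewrite Jg_0_r by lra | rewrite Jg_1_r by lra ].

Section Jamesian.

Variable g : R -> R.
Hypothesis g_incr : forall x y, 0 < x < 1 -> 0 < y < 1 -> x < y -> g x < g y.
Hypothesis g_sym : forall a, 0 < a < 1 -> g (1 - a) = - g a.
Hypothesis g_surj : forall y, exists a, 0 < a < 1 /\ g a = y.

Lemma Jg_half (a : R) : 0 <= a <= 1 -> Jg g a (1 / 2) = a.
Proof.
  intros Ha; destruct (unit_interval_cases a Ha) as [-> | [Ha' | ->]]; Jg_boundary; auto.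
  rewrite Jg_interior, g_half by (auto; lra).
  rewrite Rminus_0_r; apply ginv_g; auto.
Qed.

Lemma Jg_swap (a b : R) : inD a b -> Jg g b a = 1 - Jg g a b.
Proof.
  intros [Ha [Hb [not00 not11]]].
  destruct (unit_interval_cases a Ha) as [-> | [Ha' | ->]];
    destruct (unit_interval_cases b Hb) as [-> | [Hb' | ->]];
    Jg_boundary; try lra.
  rewrite !Jg_interior by auto.
  replace (g b - g a) with (- (g a - g b)) by ring.
  apply ginv_opp; auto.
Qed.

Lemma Jg_reflect (a b : R) : inD a b -> Jg g (1 - b) (1 - a) = Jg g a b.
Proof.
  intros [Ha [Hb [not00 not11]]].
  destruct (unit_interval_cases a Ha) as [-> | [Ha' | ->]];
    destruct (unit_interval_cases b Hb) as [-> | [Hb' | ->]];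
    rewrite ?Rminus_0_r, ?Rminus_diag; Jg_boundary; try lra.
  rewrite !Jg_interior by lra.
  rewrite (g_sym a Ha'), (g_sym b Hb'); f_equal; ring.
Qed.

(* The boundary values J(0,b) = 0 and J(1,b) = 1 lie strictly below and above the
   interior values, which lie in (0,1). *)
Lemma Jg_strict_mono (b a1 a2 : R) :
  0 < b < 1 -> 0 <= a1 -> a2 <= 1 -> a1 < a2 -> Jg g a1 b < Jg g a2 b.
Proof.
  intros Hb Ha1 Ha2 a12.
  destruct (unit_interval_cases a1 ltac:(lra)) as [-> | [Ha1' | ->]];
    destruct (unit_interval_cases a2 ltac:(lra)) as [-> | [Ha2' | ->]];
    Jg_boundary; rewrite ?Jg_interior by auto; try lra;
    try (pose proof (ginv_range g g_surj (g a1 - g b)); lra);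
    try (pose proof (ginv_range g g_surj (g a2 - g b)); lra).
  apply ginv_lt; auto.
  pose proof (g_incr _ _ Ha1' Ha2' a12); lra.
Qed.

Lemma Jg_mono (b a1 a2 : R) :
  0 <= b <= 1 -> inD a1 b -> inD a2 b -> a1 <= a2 -> Jg g a1 b <= Jg g a2 b.
Proof.
  intros Hb [Ha1 [_ [not00 not11]]] [Ha2 [_ [not00' not11']]] a12.
  destruct (Rle_lt_or_eq_dec _ _ a12) as [lt | ->]; [|lra].
  destruct (unit_interval_cases b Hb) as [-> | [Hb' | ->]].
  - rewrite !Jg_0_r by lra; lra.
  - left; apply Jg_strict_mono; lra.
  - rewrite !Jg_1_r by lra; lra.
Qed.

Lemma Jg_involutive (a b : R) : 0 < a < 1 -> 0 <= b <= 1 -> Jg g a (Jg g a b) = b.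
Proof.
  intros Ha Hb.
  destruct (unit_interval_cases b Hb) as [-> | [Hb' | ->]]; Jg_boundary; auto.
  rewrite (Jg_interior g a b) by auto.
  pose proof (ginv_range g g_surj (g a - g b)).
  rewrite Jg_interior, g_ginv by auto.
  replace (g a - (g a - g b)) with (g b) by ring.
  apply ginv_g; auto.
Qed.

End Jamesian.

Theorem theorem5p3 (g : R -> R)
  (g_cont : forall a, 0 < a < 1 -> continuity_pt g a)
  (g_incr : forall x y, 0 < x < 1 -> 0 < y < 1 -> x < y -> g x < g y)
  (g_sym : forall a, 0 < a < 1 -> g (1 - a) = - g a)
  (g_lim0 : filterlim g (at_right 0) (Rbar_locally m_infty)) :
  involutive_Jamesian (Jg g).
Proof.
  pose proof (odd_continuous_surjective g g_cont g_sym g_lim0) as g_surj.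
  split; [repeat split |].
  - intros a [Ha _]; now apply Jg_half.
  - intros a Ha; apply Jg_0_r; lra.
  - now apply Jg_swap.
  - now apply Jg_reflect.
  - now apply Jg_mono.
  - intros b a1 a2 Hb [Ha1 _] [Ha2 _] a12; apply Jg_strict_mono; auto; lra.
  - now apply Jg_involutive.
Qed.
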